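(* For the hypergeometric weights described in the context and every $n\ge2$, the associated $\tau$-function satisfies $\tau^1_n=\vartheta\tau_n$.
   Context: Weights on $\mathbb N_0$: $w^{(a)}(k)=\frac{(b^{(a)}_1)_k\cdots(b^{(a)}_{M^{(a)}})_k}{(c_1)_k\cdots(c_N)_k}\frac{(\eta^{(a)})^k}{k!}$, $a\in\{1,2\}$, with parameters such that all series converge. The moment matrix $\mathscr M$ (indices from 0) has entries $\mathscr M_{n,2m}=\sum_k k^{n+m}w^{(1)}(k)$, $\mathscr M_{n,2m+1}=\sum_k k^{n+m}w^{(2)}(k)$, as functions of $(\eta^{(1)},\eta^{(2)})$. $\tau_n$ is the determinant of the leading principal $n\times n$ submatrix $\mathscr M^{[n]}$ (rows and columns $0,\dots,n-1$). The associated $\tau$-function $\tau^1_n$ is the determinant of the $n\times n$ matrix obtained from $\mathscr M^{[n]}$ by removing its row $(\mathscr M_{n-1,0},\dots,\mathscr M_{n-1,n-1})$ and appending as last row $(\mathscr M_{n,0},\dots,\mathscr M_{n,n-1})$. $\vartheta=\eta^{(1)}\partial/\partial\eta^{(1)}+\eta^{(2)}\partial/\partial\eta^{(2)}$. *)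

From mathcomp Require Import all_boot all_algebra.
From mathcomp Require Import Rstruct.
From Stdlib Require Import Reals.
From Coquelicot Require Import Coquelicot.

Set Implicit Arguments.
Unset Strict Implicit.
Unset Printing Implicit Defensive.

Fixpoint poch (x : R) (k : nat) : R :=
  match k with
  | O => 1%R
  | S k' => (poch x k' * (x + INR k'))%R
  end.

Definition prod_poch (ps : list R) (k : nat) : R :=
  List.fold_right (fun p acc => (poch p k * acc)%R) 1%R ps.

Definition hweight (bs cs : list R) (eta : R) (k : nat) : R :=
  (prod_poch bs k / prod_poch cs k * eta ^ k / INR (k`!))%R.

(* j-th moment  sum_k k^j w(k)  (with 0^0 = 1). *)
Definition moment (j : nat) (w : nat -> R) : R :=
  Series (fun k => (INR k ^ j * w k)%R).

(* Moment matrix entries: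
   M_{n,2m} = sum_k k^{n+m} w1(k),  M_{n,2m+1} = sum_k k^{n+m} w2(k). *)
Definition mom (b1 b2 cs : list R) (e1 e2 : R) (n j : nat) : R :=
  if odd j then moment (n + j./2) (hweight b2 cs e2)
  else moment (n + j./2) (hweight b1 cs e1).

Local Open Scope ring_scope.
Definition tau (b1 b2 cs : list R) (n : nat) (e1 e2 : R) : R :=
  (\det (\matrix_(i < n, j < n) mom b1 b2 cs e1 e2 i j)).

Definition tau1 (b1 b2 cs : list R) (n : nat) (e1 e2 : R) : R :=
  (\det (\matrix_(i < n, j < n)
          mom b1 b2 cs e1 e2 (if (i : nat) == n.-1 then n else i) j)).

Local Close Scope ring_scope.

Definition moments_converge_near (bs cs : list R) (eta : R) : Prop :=
  exists r : R, (0 < r)%R /\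
    forall eta' : R, (Rabs (eta' - eta) < r)%R ->
      forall j : nat, ex_series (fun k => (INR k ^ j * hweight bs cs eta' k)%R).

(* Each moment is a power series in its own variable, and [eta d/deta]
   multiplies its k-th coefficient by k; hence the Euler operator maps the
   entry M_{i,j} to M_{i+1,j}.  Differentiating the determinant row by row,
   the Euler operator applied to tau_n is the sum over k of the determinants
   of M^[n] with row k replaced by row k+1, and all of them except the last
   one (which is tau^1_n) have two equal rows. *)

From mathcomp Require Import all_boot all_algebra.
From mathcomp Require Import Rstruct perm.
From Stdlib Require Import Reals Lra.
From Coquelicot Require Import Coquelicot.
Import GRing.Theory.

Local Open Scope R_scope.

Lemma CV_radius_ge_ex_series (a : nat -> R) (y : R) :
  ex_series (fun n => a n * y ^ n) -> Rbar_le (Rabs y) (CV_radius a).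
Proof.
move=> conv_y; apply: Rbar_not_lt_le => radius_lt.
exact: (CV_disk_outside _ _ radius_lt (ex_series_lim_0 _ conv_y)).
Qed.

Lemma CV_radius_gt_near (a : nat -> R) (x r : R) : 0 < r ->
  (forall y, Rabs (y - x) < r -> ex_series (fun n => a n * y ^ n)) ->
  Rbar_lt (Rabs x) (CV_radius a).
Proof.
move=> r_gt0 conv_near.
pose y := if Rle_dec 0 x then x + r / 2 else x - r / 2.
have [y_near y_far] : Rabs (y - x) < r /\ Rabs x < Rabs y.
  rewrite /y; case: Rle_dec => x_sign /=.
    by rewrite !Rabs_pos_eq; lra.
  by rewrite !Rabs_left; lra.
apply: (Rbar_lt_le_trans _ (Finite (Rabs y))); first exact: y_far.
exact: CV_radius_ge_ex_series (conv_near y y_near).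
Qed.

Lemma scal_PSeries_derive (a : nat -> R) (x : R) :
  x * PSeries (PS_derive a) x = PSeries (fun k => INR k * a k) x.
Proof.
rewrite -PSeries_incr_1; apply: PSeries_ext => -[|k] /=.
  by rewrite Rmult_0_l.
by rewrite /PS_derive.
Qed.

Definition moment_coef (bs cs : list R) (j k : nat) : R :=
  INR k ^ j * (prod_poch bs k / prod_poch cs k / INR k`!).

Lemma moment_termE (bs cs : list R) (j : nat) (x : R) (k : nat) :
  INR k ^ j * hweight bs cs x k = moment_coef bs cs j k * x ^ k.
Proof. by rewrite /hweight /moment_coef /Rdiv; ring. Qed.

Lemma moment_PSeries (bs cs : list R) (j : nat) (x : R) :
  moment j (hweight bs cs x) = PSeries (moment_coef bs cs j) x.
Proof.
by apply: Series_ext => k; rewrite moment_termE.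
Qed.

Lemma moment_coefS (bs cs : list R) (j k : nat) :
  moment_coef bs cs j.+1 k = INR k * moment_coef bs cs j k.
Proof. by rewrite /moment_coef /=; ring. Qed.

Definition moment_derive (bs cs : list R) (j : nat) (eta : R) : R :=
  PSeries (PS_derive (moment_coef bs cs j)) eta.

Lemma is_derive_moment (bs cs : list R) (eta : R) (j : nat) :
  moments_converge_near bs cs eta ->
  is_derive (fun x => moment j (hweight bs cs x)) eta (moment_derive bs cs j eta).
Proof.
case=> r [r_gt0 conv_near].
apply: (is_derive_ext (PSeries (moment_coef bs cs j))) => [x|].
  by rewrite moment_PSeries.
apply: is_derive_PSeries; apply: (CV_radius_gt_near _ _ _ r_gt0) => y y_near.
apply: (ex_series_ext _ _ _ (conv_near y y_near j)) => k.
exact: moment_termE.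
Qed.

Lemma euler_moment (bs cs : list R) (j : nat) (eta : R) :
  eta * moment_derive bs cs j eta = moment j.+1 (hweight bs cs eta).
Proof.
rewrite scal_PSeries_derive moment_PSeries.
by apply: PSeries_ext => k; rewrite moment_coefS.
Qed.

Section MomentMatrix.

Variables (b1 b2 cs : list R) (e1 e2 : R).

Definition mom_derive1 (i j : nat) : R :=
  if odd j then 0 else moment_derive b1 cs (i + j./2) e1.

Definition mom_derive2 (i j : nat) : R :=
  if odd j then moment_derive b2 cs (i + j./2) e2 else 0.

Lemma is_derive_mom1 (i j : nat) : moments_converge_near b1 cs e1 ->
  is_derive (fun x => mom b1 b2 cs x e2 i j) e1 (mom_derive1 i j).
Proof.
rewrite /mom /mom_derive1 => conv; case: (odd j); first exact: is_derive_const.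
exact: is_derive_moment.
Qed.

Lemma is_derive_mom2 (i j : nat) : moments_converge_near b2 cs e2 ->
  is_derive (fun y => mom b1 b2 cs e1 y i j) e2 (mom_derive2 i j).
Proof.
rewrite /mom /mom_derive2 => conv; case: (odd j); last exact: is_derive_const.
exact: is_derive_moment.
Qed.

(* Even columns depend on [e1] only, odd columns on [e2] only. *)
Lemma euler_mom (i j : nat) :
  e1 * mom_derive1 i j + e2 * mom_derive2 i j = mom b1 b2 cs e1 e2 i.+1 j.
Proof.
rewrite /mom /mom_derive1 /mom_derive2 addSn.
case: (odd j); rewrite euler_moment; ring.
Qed.

End MomentMatrix.

Local Open Scope ring_scope.

Definition replace_row {T : Type} {n : nat} (A B : 'M[T]_n) (k : 'I_n) : 'M[T]_n :=
  \matrix_(i, j) if i == k then B i j else A i j.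

Lemma is_derive_sum (I : Type) (r : seq I) (P : pred I)
    (F : I -> R -> R) (dF : I -> R) (x : R) :
  (forall i, is_derive (F i) x (dF i)) ->
  is_derive (fun y => \sum_(i <- r | P i) F i y) x (\sum_(i <- r | P i) dF i).
Proof.
move=> dF_i; elim: r => [|a r IHr].
  rewrite big_nil; apply: (is_derive_ext (fun _ : R => 0 : R)) => [y|].
    by rewrite big_nil.
  exact: is_derive_const.
rewrite big_cons; case: (boolP (P a)) => Pa.
  apply: (is_derive_ext (fun y => F a y + \sum_(i <- r | P i) F i y)) => [y|].
    by rewrite big_cons Pa.
  exact: is_derive_plus.
apply: (is_derive_ext (fun y => \sum_(i <- r | P i) F i y)) => [y|//].
by rewrite big_cons (negbTE Pa).
Qed.

Lemma is_derive_prod (I : eqType) (r : seq I) (F : I -> R -> R) (dF : I -> R) (x : R) :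
  uniq r -> (forall i, is_derive (F i) x (dF i)) ->
  is_derive (fun y => \prod_(i <- r) F i y) x
    (\sum_(k <- r) \prod_(i <- r) (if i == k then dF i else F i x)).
Proof.
move=> + dF_i; elim: r => [_|a r IHr] /=.
  rewrite big_nil; apply: (is_derive_ext (fun _ : R => 1 : R)) => [y|].
    by rewrite big_nil.
  exact: is_derive_const.
case/andP=> a_notin_r uniq_r.
have prod_r_a : \prod_(i <- r) (if i == a then dF i else F i x) = \prod_(i <- r) F i x.
  apply: eq_big_seq => i i_in_r; case: eqP => // i_a.
  by rewrite -i_a i_in_r in a_notin_r.
have sum_r : \sum_(k <- r) \prod_(i <- a :: r) (if i == k then dF i else F i x)
    = F a x * \sum_(k <- r) \prod_(i <- r) (if i == k then dF i else F i x).
  rewrite big_distrr; apply: eq_big_seq => k k_in_r; rewrite big_cons.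
  case: eqP => // a_k.
  by rewrite a_k k_in_r in a_notin_r.
rewrite big_cons big_cons eqxx prod_r_a sum_r.
apply: (is_derive_ext (fun y => F a y * \prod_(i <- r) F i y)) => [y|].
  by rewrite big_cons.
apply: is_derive_mult; [exact: dF_i | exact: IHr | exact: Rmult_comm].
Qed.

Lemma is_derive_det (n : nat) (A : R -> 'M[R]_n) (dA : 'M[R]_n) (x : R) :
  (forall i j, is_derive (fun y => A y i j) x (dA i j)) ->
  is_derive (fun y => \det (A y)) x (\sum_k \det (replace_row (A x) dA k)).
Proof.
move=> dA_ij.
have -> : \sum_k \det (replace_row (A x) dA k) = \sum_(s : 'S_n) (-1) ^+ s *
    \sum_k \prod_i (if i == k then dA i (s i) else A x i (s i)).
  under [RHS]eq_bigr do rewrite big_distrr.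
  rewrite [RHS]exchange_big; apply: eq_bigr => k _; apply: eq_bigr => s _.
  by congr (_ * _); apply: eq_bigr => i _; rewrite mxE.
apply: is_derive_sum => s; apply: is_derive_scal.
apply: is_derive_prod; first exact: index_enum_uniq.
by move=> i; apply: dA_ij.
Qed.

Lemma det_replace_row_lincomb (T : comPzRingType) (n : nat) (A U V : 'M[T]_n)
    (a b : T) (k : 'I_n) :
  \det (replace_row A (a *: U + b *: V) k)
    = a * \det (replace_row A U k) + b * \det (replace_row A V k).
Proof.
apply: (determinant_multilinear (i0 := k)).
- by apply/rowP => j; rewrite !mxE !eqxx.
- by apply/matrixP => i j; rewrite !mxE eq_sym (negbTE (neq_lift k i)).
- by apply/matrixP => i j; rewrite !mxE eq_sym (negbTE (neq_lift k i)).
Qed.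

(* Replacing row [k] by row [k+1] duplicates a row unless [k] is the last one. *)
Lemma sum_det_replace_row_succ (T : comPzRingType) (n : nat) (M : nat -> 'I_n.+1 -> T) :
  \sum_k \det (replace_row (\matrix_(i, j) M i j) (\matrix_(i, j) M i.+1 j) k)
    = \det (\matrix_(i, j) M (if i == n :> nat then n.+1 else i) j).
Proof.
rewrite big_ord_recr /= big1 ?add0r.
  congr (\det _); apply/matrixP => i j; rewrite !mxE -val_eqE /=.
  by case: eqP => [->|].
move=> k _; set k' := widen_ord (leqnSn n) k.
have k_lt_n : (k.+1 < n.+1)%nat by rewrite ltnS ltn_ord.
apply: (@determinant_alternate _ _ _ k' (Ordinal k_lt_n)).
  by rewrite -val_eqE /= (ltn_eqF (ltnSn k)).
by move=> j; rewrite !mxE eqxx -val_eqE /= eqn_leq ltnn.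
Qed.

Section Tau.

Variables (b1 b2 cs : list R) (e1 e2 : R) (n : nat).

Definition mom_mx : 'M[R]_n := \matrix_(i, j) mom b1 b2 cs e1 e2 i j.
Definition mom_succ_mx : 'M[R]_n := \matrix_(i, j) mom b1 b2 cs e1 e2 i.+1 j.
Definition mom_derive1_mx : 'M[R]_n := \matrix_(i, j) mom_derive1 b1 cs e1 i j.
Definition mom_derive2_mx : 'M[R]_n := \matrix_(i, j) mom_derive2 b2 cs e2 i j.

Lemma is_derive_tau_e1 : moments_converge_near b1 cs e1 ->
  is_derive (fun x => tau b1 b2 cs n x e2) e1
    (\sum_k \det (replace_row mom_mx mom_derive1_mx k)).
Proof.
move=> conv; apply: (@is_derive_det _ (fun x => \matrix_(i, j) mom b1 b2 cs x e2 i j)).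
move=> i j; rewrite mxE.
apply: (is_derive_ext (fun x => mom b1 b2 cs x e2 i j)) => [x|]; first by rewrite mxE.
exact: is_derive_mom1.
Qed.

Lemma is_derive_tau_e2 : moments_converge_near b2 cs e2 ->
  is_derive (fun y => tau b1 b2 cs n e1 y) e2
    (\sum_k \det (replace_row mom_mx mom_derive2_mx k)).
Proof.
move=> conv; apply: (@is_derive_det _ (fun y => \matrix_(i, j) mom b1 b2 cs e1 y i j)).
move=> i j; rewrite mxE.
apply: (is_derive_ext (fun y => mom b1 b2 cs e1 y i j)) => [y|]; first by rewrite mxE.
exact: is_derive_mom2.
Qed.

Lemma euler_mom_mx : e1 *: mom_derive1_mx + e2 *: mom_derive2_mx = mom_succ_mx.
Proof. by apply/matrixP => i j; rewrite !mxE; exact: euler_mom. Qed.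

End Tau.

Lemma tau1_euler (b1 b2 cs : list R) (e1 e2 : R) (n : nat) :
  tau1 b1 b2 cs n.+1 e1 e2 =
    e1 * \sum_k \det (replace_row (mom_mx b1 b2 cs e1 e2 n.+1)
                                 (mom_derive1_mx b1 cs e1 n.+1) k)
    + e2 * \sum_k \det (replace_row (mom_mx b1 b2 cs e1 e2 n.+1)
                                   (mom_derive2_mx b2 cs e2 n.+1) k).
Proof.
rewrite /tau1 /=.
rewrite -(@sum_det_replace_row_succ _ _ (fun i (j : 'I_n.+1) => mom b1 b2 cs e1 e2 i j)).
rewrite !big_distrr -big_split /=.
by apply: eq_bigr => k _; rewrite -det_replace_row_lincomb euler_mom_mx.
Qed.

Local Close Scope ring_scope.

Theorem mainTheorem9 (b1 b2 cs : list R) (e1 e2 : R) (n : nat) :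
  (2 <= n)%nat ->
  (forall c, List.In c cs -> forall k : nat, (c + INR k <> 0)%R) ->
  moments_converge_near b1 cs e1 ->
  moments_converge_near b2 cs e2 ->
  exists d1 d2 : R,
    is_derive (fun x => tau b1 b2 cs n x e2) e1 d1 /\
    is_derive (fun y => tau b1 b2 cs n e1 y) e2 d2 /\
    tau1 b1 b2 cs n e1 e2 = (e1 * d1 + e2 * d2)%R.
Proof.
case: n => [//|n] _ _ conv1 conv2.
do 2 eexists; split; last split.
- exact: is_derive_tau_e1.
- exact: is_derive_tau_e2.
exact: tau1_euler.
Qed.
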